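(* Let $b(z)=\prod_{j=1}^nb_{\alpha_j}(z)$ be a finite Blaschke product, $b_{\alpha_j}(z)=\frac{z-\alpha_j}{1-\bar\alpha_jz}$, $\alpha_j\in\mathbb{D}$, and let $\epsilon(b)=\min\{1-|\alpha_j|:1\le j\le n\}$. Then for $1\le\mathfrak p<2$ there is a constant $C$ depending only on $\mathfrak p$ and $n$ such that $\|b\|^2_{D_{\mathfrak p}}\le C\,\epsilon(b)^{1-\mathfrak p}$.
   Context: For $\alpha\in\mathbb{R}$, the one-variable Dirichlet-type space $D_\alpha$ consists of holomorphic $f(z)=\sum_{k\ge0}a_kz^k$ on $\mathbb{D}$ with $\|f\|^2_{D_\alpha}=\sum_{k\ge0}(k+1)^\alpha|a_k|^2<\infty$. *)

From Stdlib Require Import Reals Lra.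
Open Scope R_scope.

Definition Cx : Type := (R * R)%type.
Definition Cre (z : Cx) : R := fst z.
Definition Cim (z : Cx) : R := snd z.
Definition C0x : Cx := (0, 0).
Definition C1x : Cx := (1, 0).
Definition Caddx (z w : Cx) : Cx := (fst z + fst w, snd z + snd w).
Definition Coppx (z : Cx) : Cx := (- fst z, - snd z).
Definition Cmulx (z w : Cx) : Cx :=
  (fst z * fst w - snd z * snd w, fst z * snd w + snd z * fst w).
Definition Cconjx (z : Cx) : Cx := (fst z, - snd z).
Definition Cscalex (r : R) (z : Cx) : Cx := (r * fst z, r * snd z).
Fixpoint Cpowx (z : Cx) (k : nat) : Cx :=
  match k with O => C1x | S j => Cmulx z (Cpowx z j) end.
Definition Cnorm2 (z : Cx) : R := fst z * fst z + snd z * snd z.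
Definition Cabsx (z : Cx) : R := sqrt (Cnorm2 z).

(* sum_{i=0}^{k} f i *)
Fixpoint Csumx (f : nat -> Cx) (k : nat) : Cx :=
  match k with O => f O | S j => Caddx (Csumx f j) (f (S k - 1)%nat) end.

Definition Cconv (f g : nat -> Cx) (k : nat) : Cx :=
  Csumx (fun i => Cmulx (f i) (g (k - i)%nat)) k.

(* Taylor coefficients at 0 of b_a(z) = (z - a)/(1 - conj(a) z), |a| < 1:
   coefficient 0 is -a, coefficient j+1 is (1-|a|^2) conj(a)^j. *)
Definition blaschke_coef (a : Cx) (k : nat) : Cx :=
  match k with
  | O => Coppx a
  | S j => Cscalex (1 - Cnorm2 a) (Cpowx (Cconjx a) j)
  end.

(* Taylor coefficients of b = prod_{j<n} b_{alpha j} *)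
Fixpoint bcoef (alpha : nat -> Cx) (n : nat) : nat -> Cx :=
  match n with
  | O => fun k => match k with O => C1x | _ => C0x end
  | S m => Cconv (bcoef alpha m) (blaschke_coef (alpha m))
  end.

Fixpoint epsb (alpha : nat -> Cx) (n : nat) : R :=
  match n with
  | O => 1
  | S O => 1 - Cabsx (alpha O)
  | S m => Rmin (epsb alpha m) (1 - Cabsx (alpha m))
  end.

(* ||f||^2_{D_p} summand for coefficient sequence a *)
Definition Dterm (p : R) (a : nat -> Cx) (k : nat) : R :=
  Rpower (INR (k + 1)) p * Cnorm2 (a k).

From Stdlib Require Import Reals Lra Lia.
Open Scope R_scope.

(* Along the product we follow two norms of
   the moduli of the coefficients: the l^1 norm, multiplied by at most 3 by each factor, and
   the l^2 norm with weight w_k = (k+1)^(p/2), whose square is the D_p norm.  As p/2 <= 1,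
   the weight is subadditive, w_k <= w_i + w_(k-i), so by Young's inequality l^2 * l^1 -> l^2
   the weighted norm of a product is controlled by the l^1 and weighted norms of the factors.
   For one factor, with u = 1 - |a|, the bound (k+1)^p <= (k+1) u^(1-p) + (k+1)^2 u^(2-p)
   interpolates between its D_1 norm, which is O(1), and its D_2 norm, which is O(1/u): its
   D_p norm is O(u^(1-p)), and u^(1-p) <= eps(b)^(1-p). *)

Lemma Cnorm2_ge0 z : 0 <= Cnorm2 z.
Proof. unfold Cnorm2; nra. Qed.

Lemma Cabsx_ge0 z : 0 <= Cabsx z.
Proof. apply sqrt_pos. Qed.

Lemma Cnorm2_Cabsx z : Cnorm2 z = Cabsx z ^ 2.
Proof. unfold Cabsx; rewrite <- Rsqr_pow2, Rsqr_sqrt; auto using Cnorm2_ge0. Qed.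

Lemma Cabsx_mul z w : Cabsx (Cmulx z w) = Cabsx z * Cabsx w.
Proof.
  unfold Cabsx; rewrite <- sqrt_mult by apply Cnorm2_ge0.
  f_equal; unfold Cnorm2, Cmulx; simpl; ring.
Qed.

Lemma Cabsx_add z w : Cabsx (Caddx z w) <= Cabsx z + Cabsx w.
Proof.
  assert (Hcs : fst z * fst w + snd z * snd w <= Cabsx z * Cabsx w).
  { unfold Cabsx, Cnorm2; rewrite <- !Rsqr_def; apply sqrt_cauchy. }
  apply Rsqr_incr_0_var.
  - rewrite !Rsqr_pow2, <- Cnorm2_Cabsx.
    replace (Cnorm2 (Caddx z w))
      with (Cnorm2 z + Cnorm2 w + 2 * (fst z * fst w + snd z * snd w))
      by (unfold Cnorm2, Caddx; simpl; ring).
    rewrite !Cnorm2_Cabsx; nra.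
  - pose proof (Cabsx_ge0 z); pose proof (Cabsx_ge0 w); lra.
Qed.

Lemma Cabsx_opp z : Cabsx (Coppx z) = Cabsx z.
Proof. unfold Cabsx, Cnorm2, Coppx; simpl; f_equal; ring. Qed.

Lemma Cabsx_conj z : Cabsx (Cconjx z) = Cabsx z.
Proof. unfold Cabsx, Cnorm2, Cconjx; simpl; f_equal; ring. Qed.

Lemma Cabsx_scale s z : Cabsx (Cscalex s z) = Rabs s * Cabsx z.
Proof.
  unfold Cabsx, Cnorm2, Cscalex; simpl.
  rewrite <- sqrt_Rsqr_abs, <- sqrt_mult by (unfold Rsqr; nra).
  f_equal; unfold Rsqr; ring.
Qed.

Lemma Cabsx_C0 : Cabsx C0x = 0.
Proof. unfold Cabsx, Cnorm2, C0x; simpl; rewrite Rmult_0_l, Rplus_0_r; apply sqrt_0. Qed.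

Lemma Cabsx_C1 : Cabsx C1x = 1.
Proof. unfold Cabsx, Cnorm2, C1x; simpl; rewrite Rmult_0_l, Rplus_0_r, Rmult_1_l; apply sqrt_1. Qed.

Lemma Cabsx_pow z j : Cabsx (Cpowx z j) = Cabsx z ^ j.
Proof. induction j; simpl; [apply Cabsx_C1 | rewrite Cabsx_mul, IHj; ring]. Qed.

Lemma Cabsx_Csumx h k : Cabsx (Csumx h k) <= sum_f_R0 (fun i => Cabsx (h i)) k.
Proof.
  induction k as [|k IH]; simpl; [lra|].
  replace (S (S k) - 1)%nat with (S k) by lia.
  pose proof (Cabsx_add (Csumx h k) (h (S k))); simpl in IH; lra.
Qed.

Definition sums_le (f : nat -> R) (B : R) : Prop := forall N, sum_f_R0 f N <= B.

Lemma sums_le_le f g B : (forall k, f k <= g k) -> sums_le g B -> sums_le f B.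
Proof. intros Hfg Hg N; apply Rle_trans with (sum_f_R0 g N); auto using sum_Rle. Qed.

Lemma sums_le_weaken f B B' : B <= B' -> sums_le f B -> sums_le f B'.
Proof. intros HB Hf N; specialize (Hf N); lra. Qed.

Lemma sums_le_plus f g A B :
  sums_le f A -> sums_le g B -> sums_le (fun k => f k + g k) (A + B).
Proof. intros Hf Hg N; rewrite sum_plus; specialize (Hf N); specialize (Hg N); lra. Qed.

Lemma sum_f_R0_mult_l c f N : sum_f_R0 (fun k => c * f k) N = c * sum_f_R0 f N.
Proof. rewrite scal_sum; apply sum_eq; intros; ring. Qed.

Lemma sums_le_scal c f B : 0 <= c -> sums_le f B -> sums_le (fun k => c * f k) (c * B).
Proof. intros Hc Hf N; rewrite sum_f_R0_mult_l; apply Rmult_le_compat_l; auto. Qed.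

Lemma sums_le_ge0 f B : (forall k, 0 <= f k) -> sums_le f B -> 0 <= B.
Proof. intros Hf HB; apply Rle_trans with (sum_f_R0 f 0); auto using cond_pos_sum. Qed.

Lemma sums_le_head f : (forall k, f (S k) = 0) -> sums_le f (f 0%nat).
Proof. intros Hf N; induction N as [|N IH]; simpl; [lra | rewrite Hf; lra]. Qed.

Lemma sums_le_shift f B :
  0 <= B -> sums_le (fun j => f (S j)) B -> sums_le f (f 0%nat + B).
Proof.
  intros HB Hf [|N]; [simpl; lra|].
  rewrite decomp_sum by lia; specialize (Hf N); simpl; lra.
Qed.

Lemma infinite_sum_sums_le f B :
  (forall k, 0 <= f k) -> sums_le f B -> exists S, infinite_sum f S /\ S <= B.
Proof.
  intros Hf HB.
  assert (Hgrow : Un_growing (sum_f_R0 f))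
    by (intros N; simpl; specialize (Hf (S N)); lra).
  destruct (growing_cv _ Hgrow) as [S HS]; [exists B; intros x [N ->]; apply HB|].
  exists S; split; [exact HS|].
  apply (@Rle_cv_lim (sum_f_R0 f) (fun _ => B) S B HB HS).
  intros eps Heps; exists 0%nat; intros; unfold Rdist; rewrite Rminus_diag, Rabs_R0; lra.
Qed.

Definition rconv (f g : nat -> R) (k : nat) : R :=
  sum_f_R0 (fun i => f i * g (k - i)%nat) k.

Lemma Cabsx_Cconv F G k :
  Cabsx (Cconv F G k) <= rconv (fun i => Cabsx (F i)) (fun i => Cabsx (G i)) k.
Proof.
  eapply Rle_trans; [apply Cabsx_Csumx|].
  right; apply sum_eq; intros; apply Cabsx_mul.
Qed.

Lemma rconv_ge0 f g k :
  (forall i, 0 <= f i) -> (forall i, 0 <= g i) -> 0 <= rconv f g k.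
Proof. intros; apply cond_pos_sum; intros; apply Rmult_le_pos; auto. Qed.

Lemma sum_f_R0_rev h k : sum_f_R0 (fun i => h (k - i)%nat) k = sum_f_R0 h k.
Proof.
  induction k as [|k IH]; [reflexivity|].
  rewrite decomp_sum by lia; simpl Init.Nat.pred.
  rewrite (sum_eq _ (fun i => h (k - i)%nat)) by reflexivity.
  rewrite IH, Nat.sub_0_r; simpl; ring.
Qed.

Lemma rconv_comm f g k : rconv f g k = rconv g f k.
Proof.
  unfold rconv; rewrite <- (sum_f_R0_rev (fun i => f i * g (k - i)%nat)).
  apply sum_eq; intros i Hi; replace (k - (k - i))%nat with i by lia; ring.
Qed.

Lemma sum_f_R0_Cauchy_Schwarz x g N : (forall i, 0 <= g i) ->
  sum_f_R0 (fun i => x i * g i) N ^ 2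
  <= sum_f_R0 g N * sum_f_R0 (fun i => x i ^ 2 * g i) N.
Proof.
  intros Hg; induction N as [|N IH]; [simpl; specialize (Hg 0%nat); nra|].
  cbn [sum_f_R0].
  set (A := sum_f_R0 g N) in *; set (B := sum_f_R0 (fun i => x i * g i) N) in *;
  set (C := sum_f_R0 (fun i => x i ^ 2 * g i) N) in *.
  assert (HA : 0 <= A) by (apply cond_pos_sum; auto).
  assert (HC : 0 <= C)
    by (apply cond_pos_sum; intros i; specialize (Hg i); nra).
  set (y := x (S N)); set (w := g (S N)); assert (Hw : 0 <= w) by apply Hg.
  clearbody A B C y w.
  (* the discriminant of  A t^2 - 2 B t + C  is  4 (B^2 - A C) <= 0 *)
  assert (Hquad : 2 * B * y <= A * y ^ 2 + C).
  { destruct HA as [HA | <-]; [| assert (B = 0) by nra; subst B; nra].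
    assert (A * (A * y ^ 2 + C - 2 * B * y) = (A * y - B) ^ 2 + (A * C - B ^ 2)) by ring.
    pose proof (pow2_ge_0 (A * y - B)); nra. }
  nra.
Qed.

Lemma rconv_sq_le f g k : (forall i, 0 <= g i) ->
  rconv f g k ^ 2 <= sum_f_R0 g k * rconv (fun i => f i ^ 2) g k.
Proof.
  intros Hg; unfold rconv; rewrite <- (sum_f_R0_rev g k).
  apply (sum_f_R0_Cauchy_Schwarz f (fun i => g (k - i)%nat)); auto.
Qed.

Lemma sums_le_rconv f g F G :
  (forall i, 0 <= f i) -> (forall i, 0 <= g i) ->
  sums_le f F -> sums_le g G -> sums_le (rconv f g) (F * G).
Proof.
  intros Hf Hg HF HG N.
  apply Rle_trans with (sum_f_R0 f N * sum_f_R0 g N).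
  - destruct N as [|N]; [simpl; unfold rconv; simpl; lra|].
    rewrite cauchy_finite by lia.
    assert (0 <= sum_f_R0 (fun k => sum_f_R0 (fun l => f (S (l + k)) * g (S N - l)%nat)
                                      (Init.Nat.pred (S N - k))) (Init.Nat.pred (S N))).
    { apply cond_pos_sum; intros; apply cond_pos_sum; intros; apply Rmult_le_pos; auto. }
    unfold rconv; lra.
  - apply Rmult_le_compat; auto using cond_pos_sum.
Qed.

Lemma sums_le_rconv_sq f g G B : (forall i, 0 <= g i) ->
  sums_le g G -> sums_le (fun i => f i ^ 2) B ->
  sums_le (fun k => rconv f g k ^ 2) (G * (B * G)).
Proof.
  intros Hg HG HB.
  apply sums_le_le with (fun k => G * rconv (fun i => f i ^ 2) g k).
  - intros k; eapply Rle_trans; [apply rconv_sq_le; auto|].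
    apply Rmult_le_compat_r; [apply rconv_ge0; auto using pow2_ge_0 | apply HG].
  - apply sums_le_scal; [eapply sums_le_ge0; eauto|].
    apply sums_le_rconv; auto using pow2_ge_0.
Qed.

Lemma rconv_weight_le w f g k :
  (forall i, (i <= k)%nat -> w k <= w i + w (k - i)%nat) ->
  (forall i, 0 <= f i) -> (forall i, 0 <= g i) ->
  w k * rconv f g k
  <= rconv (fun i => w i * f i) g k + rconv f (fun j => w j * g j) k.
Proof.
  intros Hw Hf Hg; unfold rconv.
  rewrite <- sum_plus, <- sum_f_R0_mult_l; apply sum_Rle; intros i Hi.
  specialize (Hw i Hi); specialize (Hf i); specialize (Hg (k - i)%nat).
  assert (0 <= f i * g (k - i)%nat) by nra; nra.
Qed.

Lemma sums_le_weighted_rconv_sq w f g F G Df Dg :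
  (forall i k, (i <= k)%nat -> w k <= w i + w (k - i)%nat) -> (forall k, 0 <= w k) ->
  (forall i, 0 <= f i) -> (forall i, 0 <= g i) -> sums_le f F -> sums_le g G ->
  sums_le (fun k => (w k * f k) ^ 2) Df -> sums_le (fun k => (w k * g k) ^ 2) Dg ->
  sums_le (fun k => (w k * rconv f g k) ^ 2)
    (2 * (G * (Df * G)) + 2 * (F * (Dg * F))).
Proof.
  intros Hsub Hw Hf Hg HF HG HDf HDg.
  set (u := fun k => rconv (fun i => w i * f i) g k).
  set (v := fun k => rconv (fun j => w j * g j) f k).
  apply sums_le_le with (fun k => 2 * u k ^ 2 + 2 * v k ^ 2).
  - intros k.
    assert (Huv : w k * rconv f g k <= u k + v k).
    { unfold u, v; rewrite (rconv_comm _ f); apply rconv_weight_le; auto. }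
    assert (0 <= w k * rconv f g k) by (apply Rmult_le_pos; auto using rconv_ge0).
    pose proof (pow2_ge_0 (u k - v k)); nra.
  - apply sums_le_plus; apply sums_le_scal; try lra; apply sums_le_rconv_sq; auto.
Qed.

Lemma sums_le_geom x : 0 <= x < 1 -> sums_le (fun j => x ^ j) (/ (1 - x)).
Proof.
  intros Hx N; rewrite tech3 by lra; unfold Rdiv.
  rewrite <- (Rmult_1_l (/ (1 - x))) at 2.
  apply Rmult_le_compat_r; [left; apply Rinv_0_lt_compat; lra|].
  pose proof (pow_le x (S N)); lra.
Qed.

Lemma sums_le_geom_succ x :
  0 <= x < 1 -> sums_le (fun j => INR (j + 1) * x ^ j) (/ (1 - x) ^ 2).
Proof.
  intros Hx.
  apply sums_le_le with (rconv (pow x) (pow x)).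
  - intros j; right; unfold rconv.
    rewrite (sum_eq _ (fun _ => x ^ j)), sum_cte, Nat.add_1_r; [ring|].
    intros i Hi; rewrite <- pow_add; f_equal; lia.
  - replace (/ (1 - x) ^ 2) with (/ (1 - x) * / (1 - x)) by (field; lra).
    apply sums_le_rconv; try (intros; apply pow_le; lra); apply sums_le_geom; lra.
Qed.

Lemma sum_f_R0_INR_succ j : sum_f_R0 (fun i => INR (i + 1)) j = INR (j + 1) * INR (j + 2) / 2.
Proof.
  induction j as [|j IH]; [simpl; field|].
  cbn [sum_f_R0]; rewrite IH, !plus_INR, !S_INR; simpl; field.
Qed.

Lemma sums_le_geom_succ_sq x :
  0 <= x < 1 -> sums_le (fun j => INR (j + 1) ^ 2 * x ^ j) (2 / (1 - x) ^ 3).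
Proof.
  intros Hx.
  apply sums_le_le with (fun j => 2 * rconv (fun i => INR (i + 1) * x ^ i) (pow x) j).
  - intros j; unfold rconv.
    rewrite (sum_eq _ (fun i => INR (i + 1) * x ^ j)).
    2:{ intros i Hi; rewrite Rmult_assoc, <- pow_add; do 2 f_equal; lia. }
    rewrite <- scal_sum, sum_f_R0_INR_succ, !plus_INR; simpl.
    pose proof (pos_INR j); pose proof (pow_le x j ltac:(lra)); nra.
  - apply (sums_le_weaken _ (2 * (/ (1 - x) ^ 2 * / (1 - x)))); [right; field; lra|].
    apply sums_le_scal; [lra|].
    apply sums_le_rconv; auto using sums_le_geom_succ, sums_le_geom; intros i;
      [apply Rmult_le_pos; [apply pos_INR|] |]; apply pow_le; lra.
Qed.

Lemma exp_le_exp x y : x <= y -> exp x <= exp y.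
Proof. intros [H | ->]; [left; apply exp_increasing |]; lra. Qed.

Lemma Rpower_pos x y : 0 < Rpower x y.
Proof. apply exp_pos. Qed.

Lemma Rpower_1_base y : Rpower 1 y = 1.
Proof. unfold Rpower; rewrite ln_1, Rmult_0_r; apply exp_0. Qed.

Lemma Rle_Rpower_l_nonpos a b q : q <= 0 -> 0 < a <= b -> Rpower b q <= Rpower a q.
Proof.
  intros Hq Hab; rewrite <- (Ropp_involutive q), (Rpower_Ropp b), (Rpower_Ropp a).
  apply Rinv_le_contravar; [apply Rpower_pos|]; apply Rle_Rpower_l; lra.
Qed.

Lemma Rpower_subadditive a b q :
  0 < a -> 0 < b -> 0 < q <= 1 -> Rpower (a + b) q <= Rpower a q + Rpower b q.
Proof.
  intros Ha Hb Hq; replace q with (1 + (q - 1)) by ring.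
  rewrite !Rpower_plus, !Rpower_1 by lra.
  assert (Rpower (a + b) (q - 1) <= Rpower a (q - 1)) by (apply Rle_Rpower_l_nonpos; lra).
  assert (Rpower (a + b) (q - 1) <= Rpower b (q - 1)) by (apply Rle_Rpower_l_nonpos; lra).
  nra.
Qed.

(* according as t u <= 1 or t u >= 1, the first or the second term dominates t^p *)
Lemma Rpower_interpolate t u p : 0 < t -> 0 < u -> 1 <= p <= 2 ->
  Rpower t p <= t * Rpower u (1 - p) + t ^ 2 * Rpower u (2 - p).
Proof.
  intros Ht Hu Hp; unfold Rpower.
  assert (E1 : t * exp ((1 - p) * ln u) = exp (ln t + (1 - p) * ln u))
    by (rewrite exp_plus, exp_ln; lra).
  assert (E2 : t ^ 2 * exp ((2 - p) * ln u) = exp (2 * ln t + (2 - p) * ln u))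
    by (replace (2 * ln t) with (ln t + ln t) by ring; rewrite !exp_plus, exp_ln by lra; ring).
  rewrite E1, E2; destruct (Rle_dec (ln t + ln u) 0).
  - pose proof (exp_pos (2 * ln t + (2 - p) * ln u)).
    assert (exp (p * ln t) <= exp (ln t + (1 - p) * ln u)) by (apply exp_le_exp; nra); lra.
  - pose proof (exp_pos (ln t + (1 - p) * ln u)).
    assert (exp (p * ln t) <= exp (2 * ln t + (2 - p) * ln u)) by (apply exp_le_exp; nra); lra.
Qed.

Definition blaschke_abs (a : Cx) (k : nat) : R := Cabsx (blaschke_coef a k).

Lemma blaschke_abs_ge0 a k : 0 <= blaschke_abs a k.
Proof. apply Cabsx_ge0. Qed.

Lemma blaschke_abs_0 a : blaschke_abs a 0 = Cabsx a.
Proof. apply Cabsx_opp. Qed.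

Lemma INR_succ_le_double j : INR (S j + 1) <= 2 * INR (j + 1).
Proof. rewrite !plus_INR, S_INR; simpl; pose proof (pos_INR j); lra. Qed.

Section BlaschkeFactor.

Variable a : Cx.
Hypothesis Ha : Cabsx a < 1.

Lemma blaschke_abs_S j : blaschke_abs a (S j) = (1 - Cabsx a ^ 2) * Cabsx a ^ j.
Proof.
  unfold blaschke_abs; simpl; rewrite Cabsx_scale, Cabsx_pow, Cabsx_conj, Cnorm2_Cabsx.
  rewrite Rabs_right; [reflexivity|].
  pose proof (Cabsx_ge0 a); nra.
Qed.

Lemma blaschke_abs_S_sq j :
  blaschke_abs a (S j) ^ 2 = (1 - Cabsx a ^ 2) ^ 2 * (Cabsx a ^ 2) ^ j.
Proof. rewrite blaschke_abs_S, Rpow_mult_distr, <- !pow_mult, Nat.mul_comm; reflexivity. Qed.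

Lemma sums_le_blaschke_abs : sums_le (blaschke_abs a) 3.
Proof.
  pose proof (Cabsx_ge0 a); set (r := Cabsx a) in *.
  apply (sums_le_weaken _ (blaschke_abs a 0 + (1 - r ^ 2) * / (1 - r))).
  { rewrite blaschke_abs_0; replace ((1 - r ^ 2) * / (1 - r)) with (1 + r) by (field; lra).
    fold r; lra. }
  apply sums_le_shift; [apply Rmult_le_pos; [nra | left; apply Rinv_0_lt_compat; lra]|].
  apply (sums_le_le _ (fun j => (1 - r ^ 2) * r ^ j)).
  { intros j; right; apply blaschke_abs_S. }
  apply sums_le_scal; [nra | apply sums_le_geom; lra].
Qed.

Lemma sums_le_blaschke_D1 : sums_le (fun k => INR (k + 1) * blaschke_abs a k ^ 2) 3.
Proof.
  pose proof (Cabsx_ge0 a); set (r := Cabsx a) in *.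
  assert (Hr2 : 0 <= r ^ 2 < 1) by nra.
  apply (sums_le_weaken _ (INR (0 + 1) * blaschke_abs a 0 ^ 2
                           + 2 * (1 - r ^ 2) ^ 2 * / (1 - r ^ 2) ^ 2)).
  { rewrite blaschke_abs_0; fold r.
    replace (2 * (1 - r ^ 2) ^ 2 * / (1 - r ^ 2) ^ 2) with 2 by (field; lra).
    change (INR (0 + 1)) with 1; nra. }
  apply sums_le_shift; [apply Rmult_le_pos; [nra | left; apply Rinv_0_lt_compat; nra]|].
  apply (sums_le_le _ (fun j => 2 * (1 - r ^ 2) ^ 2 * (INR (j + 1) * (r ^ 2) ^ j))).
  - intros j; rewrite blaschke_abs_S_sq; fold r.
    replace (2 * (1 - r ^ 2) ^ 2 * (INR (j + 1) * (r ^ 2) ^ j))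
      with (2 * INR (j + 1) * ((1 - r ^ 2) ^ 2 * (r ^ 2) ^ j)) by ring.
    apply Rmult_le_compat_r; [apply Rmult_le_pos; apply pow_le; nra | apply INR_succ_le_double].
  - apply sums_le_scal; [nra | apply sums_le_geom_succ; auto].
Qed.

Lemma sums_le_blaschke_D2 :
  sums_le (fun k => INR (k + 1) ^ 2 * blaschke_abs a k ^ 2) (9 / (1 - Cabsx a)).
Proof.
  pose proof (Cabsx_ge0 a); set (r := Cabsx a) in *.
  assert (Hr2 : 0 <= r ^ 2 < 1) by nra.
  apply (sums_le_weaken _ (INR (0 + 1) ^ 2 * blaschke_abs a 0 ^ 2
                           + 4 * (1 - r ^ 2) ^ 2 * (2 / (1 - r ^ 2) ^ 3))).
  { rewrite blaschke_abs_0; fold r.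
    replace (4 * (1 - r ^ 2) ^ 2 * (2 / (1 - r ^ 2) ^ 3)) with (8 * / (1 - r ^ 2))
      by (field; lra).
    assert (/ (1 - r ^ 2) <= / (1 - r)) by (apply Rinv_le_contravar; nra).
    assert (1 <= / (1 - r)) by (rewrite <- Rinv_1; apply Rinv_le_contravar; lra).
    change (INR (0 + 1)) with 1; unfold Rdiv; nra. }
  apply sums_le_shift.
  { apply Rmult_le_pos; [nra|]; unfold Rdiv; apply Rmult_le_pos; [lra|].
    left; apply Rinv_0_lt_compat, pow_lt; lra. }
  apply (sums_le_le _ (fun j => 4 * (1 - r ^ 2) ^ 2 * (INR (j + 1) ^ 2 * (r ^ 2) ^ j))).
  - intros j; rewrite blaschke_abs_S_sq; fold r.
    replace (4 * (1 - r ^ 2) ^ 2 * (INR (j + 1) ^ 2 * (r ^ 2) ^ j))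
      with (4 * INR (j + 1) ^ 2 * ((1 - r ^ 2) ^ 2 * (r ^ 2) ^ j)) by ring.
    apply Rmult_le_compat_r; [apply Rmult_le_pos; apply pow_le; nra|].
    pose proof (INR_succ_le_double j); pose proof (pos_INR (S j + 1)); nra.
  - apply sums_le_scal; [nra | apply sums_le_geom_succ_sq; auto].
Qed.

Lemma sums_le_blaschke_Dp p : 1 <= p <= 2 ->
  sums_le (fun k => Rpower (INR (k + 1)) p * blaschke_abs a k ^ 2)
    (12 * Rpower (1 - Cabsx a) (1 - p)).
Proof.
  intros Hp; pose proof (Cabsx_ge0 a); set (u := 1 - Cabsx a).
  assert (Hu : 0 < u) by (unfold u; lra).
  apply (sums_le_weaken _ (Rpower u (1 - p) * 3 + Rpower u (2 - p) * (9 / u))).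
  { replace (2 - p) with ((1 - p) + 1) by ring; rewrite Rpower_plus, Rpower_1 by lra.
    right; field; lra. }
  apply (sums_le_le _ (fun k => Rpower u (1 - p) * (INR (k + 1) * blaschke_abs a k ^ 2)
                             + Rpower u (2 - p) * (INR (k + 1) ^ 2 * blaschke_abs a k ^ 2))).
  - intros k.
    assert (Hk : 0 < INR (k + 1)) by (apply lt_0_INR; lia).
    pose proof (Rpower_interpolate (INR (k + 1)) u p Hk Hu Hp).
    pose proof (pow2_ge_0 (blaschke_abs a k)); nra.
  - apply sums_le_plus; apply sums_le_scal;
      auto using sums_le_blaschke_D1, sums_le_blaschke_D2; left; apply Rpower_pos.
Qed.

End BlaschkeFactor.

Definition Dweight (p : R) (k : nat) : R := Rpower (INR (k + 1)) (p / 2).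

Lemma Dweight_ge0 p k : 0 <= Dweight p k.
Proof. left; apply Rpower_pos. Qed.

Lemma Dweight_mul_sq p k x : (Dweight p k * x) ^ 2 = Rpower (INR (k + 1)) p * x ^ 2.
Proof.
  unfold Dweight; rewrite Rpow_mult_distr; simpl.
  rewrite Rmult_1_r, <- Rpower_plus; do 3 f_equal; field.
Qed.

Lemma Dweight_subadditive p i k :
  0 < p <= 2 -> (i <= k)%nat -> Dweight p k <= Dweight p i + Dweight p (k - i).
Proof.
  intros Hp Hik; unfold Dweight.
  assert (Hi : 0 < INR (i + 1)) by (apply lt_0_INR; lia).
  assert (Hki : 0 < INR (k - i + 1)) by (apply lt_0_INR; lia).
  apply Rle_trans with (Rpower (INR (i + 1) + INR (k - i + 1)) (p / 2)).
  - apply Rle_Rpower_l; [lra|]; split; [apply lt_0_INR; lia|].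
    rewrite <- plus_INR; apply le_INR; lia.
  - apply Rpower_subadditive; lra.
Qed.

Lemma sums_le_rconv_blaschke p a A L D E :
  1 <= p <= 2 -> Cabsx a < 1 -> Rpower (1 - Cabsx a) (1 - p) <= E ->
  (forall k, 0 <= A k) -> sums_le A L -> sums_le (fun k => (Dweight p k * A k) ^ 2) D ->
  sums_le (rconv A (blaschke_abs a)) (L * 3) /\
  sums_le (fun k => (Dweight p k * rconv A (blaschke_abs a) k) ^ 2)
    (2 * (3 * (D * 3)) + 2 * (L * (12 * E * L))).
Proof.
  intros Hp Ha HaE HA HL HD; split.
  - apply sums_le_rconv; auto using blaschke_abs_ge0, sums_le_blaschke_abs.
  - apply sums_le_weighted_rconv_sq;
      auto using blaschke_abs_ge0, sums_le_blaschke_abs, Dweight_ge0.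
    + intros i k Hik; apply Dweight_subadditive; auto; lra.
    + apply (sums_le_weaken _ (12 * Rpower (1 - Cabsx a) (1 - p))); [lra|].
      apply (sums_le_le _ (fun k => Rpower (INR (k + 1)) p * blaschke_abs a k ^ 2)).
      * intros; rewrite Dweight_mul_sq; lra.
      * apply sums_le_blaschke_Dp; auto.
Qed.

(* collects the constants of [sums_le_rconv_blaschke], with L = 3^m *)
Fixpoint bconst (m : nat) : R :=
  match m with O => 1 | S m => 18 * bconst m + 24 * 9 ^ m end.

Lemma sums_le_bcoef p alpha E m :
  1 <= p <= 2 -> 1 <= E ->
  (forall j, (j < m)%nat ->
     Cabsx (alpha j) < 1 /\ Rpower (1 - Cabsx (alpha j)) (1 - p) <= E) ->
  sums_le (fun k => Cabsx (bcoef alpha m k)) (3 ^ m) /\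
  sums_le (fun k => (Dweight p k * Cabsx (bcoef alpha m k)) ^ 2) (bconst m * E).
Proof.
  intros Hp HE Halpha; induction m as [|m IH].
  - split.
    + apply (sums_le_weaken _ (Cabsx (bcoef alpha 0 0))); [simpl; rewrite Cabsx_C1; lra|].
      apply sums_le_head; intros k; apply Cabsx_C0.
    + apply (sums_le_weaken _ ((Dweight p 0 * Cabsx (bcoef alpha 0 0)) ^ 2)).
      { rewrite Dweight_mul_sq; simpl; rewrite Cabsx_C1, Rpower_1_base; lra. }
      apply sums_le_head; intros k; simpl; rewrite Cabsx_C0; ring.
  - destruct IH as [IH1 IH2]; [intros j Hj; apply Halpha; lia|].
    destruct (Halpha m ltac:(lia)) as [Ham HamE].
    set (A := fun k => Cabsx (bcoef alpha m k)).
    destruct (sums_le_rconv_blaschke p (alpha m) A (3 ^ m) (bconst m * E) E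
                Hp Ham HamE (fun k => Cabsx_ge0 _) IH1 IH2) as [Hl1 Hl2].
    assert (Hstep : forall k,
               Cabsx (bcoef alpha (S m) k) <= rconv A (blaschke_abs (alpha m)) k)
      by (intros; apply Cabsx_Cconv).
    split.
    + rewrite <- tech_pow_Rmult, Rmult_comm; exact (sums_le_le _ _ _ Hstep Hl1).
    + apply (sums_le_le _ (fun k => (Dweight p k * rconv A (blaschke_abs (alpha m)) k) ^ 2)).
      { intros k; pose proof (Dweight_ge0 p k); pose proof (Cabsx_ge0 (bcoef alpha (S m) k)).
        apply pow_incr; split; [nra | apply Rmult_le_compat_l; auto]. }
      eapply sums_le_weaken; [|exact Hl2].
      right; cbn [bconst]; replace 9 with (3 * 3) by ring; rewrite Rpow_mult_distr; ring.
Qed.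

Lemma Dweight_Dterm p a k : (Dweight p k * Cabsx (a k)) ^ 2 = Dterm p a k.
Proof. unfold Dterm; rewrite Dweight_mul_sq, Cnorm2_Cabsx; reflexivity. Qed.

Lemma epsb_spec alpha n : (1 <= n)%nat -> (forall j, (j < n)%nat -> Cabsx (alpha j) < 1) ->
  0 < epsb alpha n /\ forall j, (j < n)%nat -> epsb alpha n <= 1 - Cabsx (alpha j).
Proof.
  induction n as [|[|m] IH]; intros Hn Halpha; [lia | |].
  - simpl; split; [specialize (Halpha 0%nat ltac:(lia)); lra|].
    intros j Hj; replace j with 0%nat by lia; lra.
  - destruct IH as [IH1 IH2]; [lia | intros; apply Halpha; lia|].
    change (epsb alpha (S (S m))) with (Rmin (epsb alpha (S m)) (1 - Cabsx (alpha (S m)))).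
    split.
    + apply Rmin_case; [lra | specialize (Halpha (S m) ltac:(lia)); lra].
    + intros j Hj; destruct (Nat.eq_dec j (S m)) as [-> | Hne]; [apply Rmin_r|].
      eapply Rle_trans; [apply Rmin_l | apply IH2; lia].
Qed.

Theorem lemma9p3 (p : R) (hp1 : 1 <= p) (hp2 : p < 2) (n : nat) (hn : (1 <= n)%nat) :
  exists C : R,
    forall alpha : nat -> Cx,
      (forall j, (j < n)%nat -> Cabsx (alpha j) < 1) ->
      exists S : R,
        infinite_sum (Dterm p (bcoef alpha n)) S /\
        S <= C * Rpower (epsb alpha n) (1 - p).
Proof.
  exists (bconst n); intros alpha Halpha.
  destruct (epsb_spec alpha n hn Halpha) as [Heps_pos Heps_le].
  assert (Heps_1 : epsb alpha n <= 1)
    by (pose proof (Heps_le 0%nat hn); pose proof (Cabsx_ge0 (alpha 0%nat)); lra).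
  set (E := Rpower (epsb alpha n) (1 - p)).
  assert (HE : 1 <= E)
    by (rewrite <- (Rpower_1_base (1 - p)); apply Rle_Rpower_l_nonpos; lra).
  destruct (sums_le_bcoef p alpha E n ltac:(lra) HE) as [_ Hbound].
  { intros j Hj; split; [auto|].
    apply Rle_Rpower_l_nonpos; [lra|]; split; [lra | auto]. }
  apply infinite_sum_sums_le.
  - intros k; apply Rmult_le_pos; [left; apply Rpower_pos | apply Cnorm2_ge0].
  - apply (sums_le_le _ (fun k => (Dweight p k * Cabsx (bcoef alpha n k)) ^ 2)); [|exact Hbound].
    intros k; rewrite Dweight_Dterm; lra.
Qed.
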